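(* Let $\{\varphi_n\},\{\psi_n\}$ be biorthogonal sequences in a Hilbert space $\mathcal H$ forming a $(\mathcal D,\mathcal E)$-quasi basis for dense subspaces $\mathcal D,\mathcal E$ with $D_\psi\subseteq\mathcal D\subseteq D(\varphi)$, $D_\varphi\subseteq\mathcal E\subseteq D(\psi)$. Let $\{f_n\}$ be an ONB such that $T_\varphi:=\overline{T_{f,\varphi}|_{\mathcal D}}$ is positive self-adjoint and $(\{f_n\},T_\varphi)$ is a constructing pair for $\{\varphi_n\}$, and let $\{g_n\}$ be an ONB such that $T_\psi:=\overline{T_{g,\psi}|_{\mathcal E}}$ is positive self-adjoint and $(\{g_n\},T_\psi)$ is a constructing pair for $\{\psi_n\}$. Then: (1) If $H_f^\alpha\mathcal D\subseteq\mathcal D$ (i.e. $\mathcal D\subseteq D(H_f^\alpha)$ and $H_f^\alpha$ maps $\mathcal D$ into $\mathcal D$) for some complex sequence $\alpha=\{\alpha_n\}$, then the linear span of $T_\varphi\mathcal D$ is dense in $\mathcal H$ and the non-self-adjoint Hamiltonian $T_\varphi H_f^\alpha T_\varphi^{-1}$ belongs to $\mathcal L(T_\varphi\mathcal D)$ (i.e. $T_\varphi\mathcal D$ is contained in its domain and is mapped into itself by it). (2) If $H_g^\alpha\mathcal E\subseteq\mathcal E$ for some complex sequence $\alpha=\{\alpha_n\}$, then the linear span of $T_\psi\mathcal E$ is dense in $\mathcal H$ and the non-self-adjoint Hamiltonian $T_\psi H_g^\alpha T_\psi^{-1}$ belongs to $\mathcal L(T_\psi\mathcal E)$.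
   Context: Inner product linear in the first argument. Biorthogonal: $\langle\varphi_n,\psi_m\rangle=\delta_{nm}$. $D_\varphi,D_\psi$ are the linear spans; $D(\varphi)=\{x:\sum_n|\langle x,\varphi_n\rangle|^2<\infty\}$, similarly $D(\psi)$. The pair is a $(\mathcal D,\mathcal E)$-quasi basis if $\sum_k\langle x,\varphi_k\rangle\langle\psi_k,y\rangle=\langle x,y\rangle$ for all $x\in\mathcal D$, $y\in\mathcal E$. For an ONB $\{f_n\}$, $T_{f,\varphi}$ is the operator with domain $D(\varphi)$, $T_{f,\varphi}x=\sum_n\langle x,\varphi_n\rangle f_n$ (similarly $T_{g,\psi}$ on $D(\psi)$); bar is closure, $|$ is restriction. A constructing pair for $\{\chi_n\}$ is $(\{f_n\},S)$ with $\{f_n\}$ an ONB, $S$ densely defined closed with densely defined inverse, $f_n\in D(S)\cap D((S^{-1})^* )$, $Sf_n=\chi_n$. (Such ONBs $\{f_n\},\{g_n\}$ always exist under the quasi-basis hypothesis.) For an ONB $\{f_n\}$ and $\alpha=\{\alpha_n\}\subset\mathbb C$, $H_f^\alpha=\sum_n\alpha_n f_n\otimes\bar f_n$, i.e. $H_f^\alpha x=\sum_n\alpha_n\langle x,f_n\rangle f_n$ on $D(H_f^\alpha)=\{x:\sum_n|\alpha_n|^2|\langle x,f_n\rangle|^2<\infty\}$. For a dense subspace $\mathcal D_0$, $\mathcal L(\mathcal D_0)$ is the algebra of linear operators from $\mathcal D_0$ into $\mathcal D_0$. *)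

(* abstract complex Hilbert space over R[i] (R : realType),
   unbounded operators represented by their graphs. *)
From HB Require Import structures.
From mathcomp Require Import all_boot all_order all_algebra.
From mathcomp Require Import complex.
From mathcomp Require Import reals.
Set Implicit Arguments. Unset Strict Implicit. Unset Printing Implicit Defensive.
Import Order.TTheory GRing.Theory Num.Theory.
Local Open Scope ring_scope.

Section HilbertDefs.
Variables (C : numClosedFieldType) (H : lmodType C) (ip : H -> H -> C).

Definition is_inner_product : Prop :=
  (forall (a : C) (x y z : H), ip (a *: x + y) z = a * ip x z + ip y z) /\
  (forall x y : H, ip y x = (ip x y)^*) /\
  (forall x : H, 0 <= ip x x) /\
  (forall x : H, ip x x = 0 -> x = 0).

Definition hnorm (x : H) : C := sqrtC (ip x x).

(* convergence of vectors / scalars; epsilons are positive reals in C *)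
Definition hcvg (u : nat -> H) (l : H) : Prop :=
  forall e : C, 0 < e -> exists N : nat, forall n, (N <= n)%N -> hnorm (u n - l) < e.

Definition ccvg (s : nat -> C) (l : C) : Prop :=
  forall e : C, 0 < e -> exists N : nat, forall n, (N <= n)%N -> `|s n - l| < e.

Definition hcomplete : Prop :=
  forall u : nat -> H,
    (forall e : C, 0 < e -> exists N : nat, forall n m, (N <= n)%N -> (N <= m)%N ->
        hnorm (u n - u m) < e) ->
    exists l, hcvg u l.

Definition has_sumH (v : nat -> H) (y : H) : Prop :=
  hcvg (fun n => \sum_(i < n) v i) y.

Definition has_sumC (s : nat -> C) (l : C) : Prop :=
  ccvg (fun n => \sum_(i < n) s i) l.

Definition sq_summable (c : nat -> C) : Prop :=
  exists M : C, forall n, \sum_(i < n) `|c i| ^+ 2 <= M.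

Definition subspace (S : H -> Prop) : Prop :=
  S 0 /\ forall (a : C) x y, S x -> S y -> S (a *: x + y).

Definition hdense (S : H -> Prop) : Prop :=
  forall (x : H) (e : C), 0 < e -> exists y, S y /\ hnorm (x - y) < e.

Definition hspan (S : H -> Prop) (x : H) : Prop :=
  exists (n : nat) (c : 'I_n -> C) (v : 'I_n -> H),
    (forall i, S (v i)) /\ x = \sum_(i < n) c i *: v i.

Definition seq_span (u : nat -> H) : H -> Prop := hspan (fun x => exists n, x = u n).

Definition is_ONB (f : nat -> H) : Prop :=
  (forall n m, ip (f n) (f m) = (n == m)%:R) /\
  (forall x, (forall n, ip x (f n) = 0) -> x = 0).

Definition biorthogonal (phi psi : nat -> H) : Prop :=
  forall n m, ip (phi n) (psi m) = (n == m)%:R.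

Definition Dseq (phi : nat -> H) (x : H) : Prop := sq_summable (fun n => ip x (phi n)).

Definition quasi_basis (phi psi : nat -> H) (D E : H -> Prop) : Prop :=
  forall x y, D x -> E y -> has_sumC (fun k => ip x (phi k) * ip (psi k) y) (ip x y).

Definition op := H -> H -> Prop.
Definition dom (T : op) (x : H) : Prop := exists y, T x y.
Definition is_linop (T : op) : Prop :=
  (forall x y y', T x y -> T x y' -> y = y') /\ T 0 0 /\
  (forall (a : C) x y x' y', T x y -> T x' y' -> T (a *: x + x') (a *: y + y')).
Definition closure_op (T : op) : op := fun x y =>
  forall e : C, 0 < e -> exists x' y', T x' y' /\ hnorm (x - x') < e /\ hnorm (y - y') < e.
Definition closed_op (T : op) : Prop := forall x y, closure_op T x y -> T x y.
Definition hrestrict (T : op) (D : H -> Prop) : op := fun x y => D x /\ T x y.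
Definition inv_op (T : op) : op := fun x y => T y x.
Definition comp_op (A B : op) : op := fun x z => exists y, B x y /\ A y z.
Definition adjoint (T : op) : op := fun y z => forall x w, T x w -> ip w y = ip x z.
Definition selfadjoint (T : op) : Prop :=
  hdense (dom T) /\ forall x y, T x y <-> adjoint T x y.
Definition positive_op (T : op) : Prop := forall x y, T x y -> 0 <= ip y x.
Definition himage (T : op) (D : H -> Prop) (y : H) : Prop := exists x, D x /\ T x y.
Definition in_L (K : op) (S : H -> Prop) : Prop := forall x, S x -> exists y, K x y /\ S y.

Definition Tfphi (f phi : nat -> H) : op := fun x y =>
  Dseq phi x /\ has_sumH (fun n => ip x (phi n) *: f n) y.

Definition Hfa (f : nat -> H) (alpha : nat -> C) : op := fun x y =>
  sq_summable (fun n => alpha n * ip x (f n)) /\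
  has_sumH (fun n => (alpha n * ip x (f n)) *: f n) y.

Definition constructing_pair (chi f : nat -> H) (S : op) : Prop :=
  is_ONB f /\ is_linop S /\ hdense (dom S) /\ closed_op S /\
  (forall x x' y, S x y -> S x' y -> x = x') /\ hdense (dom (inv_op S)) /\
  (forall n, dom S (f n) /\ dom (adjoint (inv_op S)) (f n) /\ S (f n) (chi n)).

End HilbertDefs.

From HB Require Import structures.
From mathcomp Require Import all_boot all_order all_algebra.
From mathcomp Require Import complex.
From mathcomp Require Import classical_sets reals.
Set Implicit Arguments. Unset Strict Implicit. Unset Printing Implicit Defensive.
Import Order.TTheory GRing.Theory Num.Theory.
Local Open Scope ring_scope.

(* The operator T_phi sends psi_n to f_n by biorthogonality, so the span of
   T_phi D contains the orthonormal basis {f_n} and is dense.  T_phi is defined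
   on all of D because the coefficients <x, phi_n> of x in D are square
   summable; operators being graphs, T_phi^-1 needs no injectivity, and a vector
   T_phi x with x in D is sent by T_phi H T_phi^-1 to T_phi (H x) with H x in D.
   Part (2) is part (1) with phi and psi exchanged. *)

Definition monotone_cauchy (C : numDomainType) : Prop :=
  forall a : nat -> C, {homo a : m n / (m <= n)%N >-> m <= n} ->
  forall M, (forall n, a n <= M) ->
  forall e, 0 < e -> exists N, forall m n, (N <= m)%N -> (m <= n)%N -> a n - a m < e.

Lemma real_monotone_cauchy (R : realType) : monotone_cauchy R.
Proof.
move=> a a_homo M a_le_M e e_gt0.
have a_sup : has_sup (range a).
  by split; [exists (a 0%N), 0%N | exists M => _ [n _ <-]].
have [_ [N _ <-] aN_gt] := sup_adherent e_gt0 a_sup.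
exists N => m n Nm mn.
have an_le : a n <= sup (range a) by apply: sup_upper_bound => //; exists n.
rewrite ltrBlDr -ltrBlDl in aN_gt.
by apply: le_lt_trans aN_gt; apply: lerB => //; apply: a_homo.
Qed.

(* On R[i], [x <= y] means [Im x = Im y] and [Re x <= Re y]. *)
Lemma complex_monotone_cauchy (R : realType) : monotone_cauchy R[i].
Proof.
move=> a a_homo M a_le_M e; rewrite ltcE => /andP[/eqP Im_e Re_e_gt0].
have Im_a n : complex.Im (a n) = complex.Im (a 0%N).
  by have := a_homo 0%N n (leq0n n); rewrite lecE => /andP[/eqP].
have Re_homo : {homo (fun n => complex.Re (a n)) : m n / (m <= n)%N >-> m <= n}.
  by move=> m n /a_homo; rewrite lecE => /andP[].
have Re_le n : complex.Re (a n) <= complex.Re M by have := a_le_M n; rewrite lecE => /andP[].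
have [N HN] := @real_monotone_cauchy R _ Re_homo _ Re_le _ Re_e_gt0.
exists N => m n Nm mn; move: (HN m n Nm mn) (Im_a n) (Im_a m).
rewrite ltcE Im_e; case: (a n) => [xn yn]; case: (a m) => [xm ym] /= Re_lt -> ->.
by rewrite subrr eqxx.
Qed.

Lemma sum_ordB (V : zmodType) (F : nat -> V) m n : (m <= n)%N ->
  \sum_(i < n) F i - \sum_(i < m) F i = \sum_(m <= i < n) F i.
Proof.
move=> mn; rewrite (@telescope_sumr_eq _ m n (fun k => \sum_(i < k) F i)) // => k _.
by rewrite big_ord_recr /= addrAC subrr add0r.
Qed.

Lemma seq_span_term (C : numClosedFieldType) (H : lmodType C) (u : nat -> H) n :
  seq_span u (u n).
Proof.
by exists 1%N, (fun=> 1), (fun=> u n); rewrite big_ord1 scale1r; split => // _; exists n.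
Qed.

Lemma in_L_conj (C : numClosedFieldType) (H : lmodType C) (T K : op H) (D : H -> Prop) :
  (forall x, D x -> dom T x) -> (forall x, D x -> exists y, K x y /\ D y) ->
  in_L (comp_op T (comp_op K (inv_op T))) (himage T D).
Proof.
move=> D_domT K_D y [x [Dx Txy]].
have [w [Kxw Dw]] := K_D x Dx; have [z Twz] := D_domT w Dw.
by exists z; split; [exists w; split; [exists x | ] | exists w].
Qed.

Section Hilbert.
Variables (C : numClosedFieldType) (H : lmodType C) (ip : H -> H -> C).
Hypothesis ip_inner : is_inner_product ip.

Lemma ip0l z : ip 0 z = 0.
Proof.
have [ipDZl _] := ip_inner; have := ipDZl 1 0 0 z.
by rewrite scaler0 addr0 mul1r => /esym/eqP; rewrite -subr_eq0 addrK => /eqP.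
Qed.

Lemma ipDl x y z : ip (x + y) z = ip x z + ip y z.
Proof. by have [ipDZl _] := ip_inner; rewrite -[x]scale1r ipDZl mul1r scale1r. Qed.

Lemma ipZl a x z : ip (a *: x) z = a * ip x z.
Proof. by have [ipDZl _] := ip_inner; rewrite -[a *: x]addr0 ipDZl ip0l addr0. Qed.

Lemma ipBl x y z : ip (x - y) z = ip x z - ip y z.
Proof. by rewrite ipDl -scaleN1r ipZl mulN1r. Qed.

Lemma ipC x y : ip y x = (ip x y)^*.
Proof. by have [_ []] := ip_inner. Qed.

Lemma ipBr x y z : ip z (x - y) = ip z x - ip z y.
Proof. by rewrite [ip z x]ipC [ip z y]ipC ipC ipBl rmorphB. Qed.

Lemma ip_ge0 x : 0 <= ip x x.
Proof. by have [_ [_ []]] := ip_inner. Qed.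

Lemma ip_suml (I : Type) (r : seq I) (P : pred I) (F : I -> H) z :
  ip (\sum_(i <- r | P i) F i) z = \sum_(i <- r | P i) ip (F i) z.
Proof. exact: (big_morph (fun u => ip u z) (fun x y => ipDl x y z) (ip0l z)). Qed.

Lemma hnorm0 : hnorm ip 0 = 0.
Proof. by rewrite /hnorm ip0l sqrtC0. Qed.

Lemma hnormN x : hnorm ip (- x) = hnorm ip x.
Proof. by rewrite /hnorm -sub0r ipBl ip0l ipBr [ip x 0]ipC ip0l conjC0 !sub0r opprK. Qed.

Lemma hnorm_ltE x e : 0 < e -> (hnorm ip x < e) = (ip x x < e ^+ 2).
Proof.
move=> e_gt0; rewrite /hnorm -(ltr_pXn2r (n := 2)) ?sqrtCK //.
  by rewrite nnegrE sqrtC_ge0 ip_ge0.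
by rewrite nnegrE ltW.
Qed.

Lemma closure_op_sub (T : op H) x y : T x y -> closure_op ip T x y.
Proof. by move=> Txy e e_gt0; exists x, y; rewrite !subrr hnorm0. Qed.

Section Orthonormal.
Variable f : nat -> H.

Lemma Tfphi_biorthogonal phi psi n :
  (forall k, ip (psi n) (phi k) = (n == k)%:R) -> Dseq ip phi (psi n) ->
  Tfphi ip f phi (psi n) (f n).
Proof.
move=> psi_phi phi_psi; split => // e e_gt0; exists n.+1 => k nk.
suff -> : \sum_(i < k) ip (psi n) (phi i) *: f i = f n by rewrite subrr hnorm0.
under eq_bigr => i _ do rewrite psi_phi scaler_nat mulrb eq_sym.
by rewrite -big_mkcond big_ord1_eq nk.
Qed.

Hypothesis f_orthonormal : forall n m, ip (f n) (f m) = (n == m)%:R.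

Lemma ip_sum_f (c : nat -> C) m n k :
  ip (\sum_(m <= i < n) c i *: f i) (f k) = if (m <= k < n)%N then c k else 0.
Proof.
rewrite ip_suml (eq_bigr (fun i => if i == k then c i else 0)) => [|i _].
  by rewrite -big_mkcond big_nat1_eq.
by rewrite ipZl f_orthonormal mulr_natr mulrb.
Qed.

Lemma ip_sum_self (c : nat -> C) m n :
  ip (\sum_(m <= i < n) c i *: f i) (\sum_(m <= i < n) c i *: f i) =
  \sum_(m <= i < n) `|c i| ^+ 2.
Proof.
rewrite {1}ip_suml; apply: eq_big_nat => i i_mn.
by rewrite ipZl ipC ip_sum_f i_mn normCK.
Qed.

Lemma bessel x N : \sum_(i < N) `|ip x (f i)| ^+ 2 <= ip x x.
Proof.
pose s := \sum_(0 <= i < N) ip x (f i) *: f i.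
have ip_s_x : ip s x = \sum_(0 <= i < N) `|ip x (f i)| ^+ 2.
  by rewrite ip_suml; apply: eq_bigr => i _; rewrite ipZl normCK -ipC.
have ip_x_s : ip x s = \sum_(0 <= i < N) `|ip x (f i)| ^+ 2.
  by rewrite ipC ip_s_x geC0_conj // sumr_ge0 // => i _; rewrite exprn_ge0.
have := ip_ge0 (x - s).
by rewrite ipBl !ipBr ip_s_x ip_x_s ip_sum_self subrr subr0 subr_ge0 big_mkord.
Qed.

Lemma sq_norm_coef_le x n : `|ip x (f n)| ^+ 2 <= ip x x.
Proof.
apply: le_trans (bessel x n.+1).
by rewrite big_ord_recr /= lerDr sumr_ge0 // => i _; rewrite exprn_ge0.
Qed.

Lemma hcvg_ip_f u l n : hcvg ip u l ->
  forall e, 0 < e -> exists N, forall k, (N <= k)%N -> `|ip (u k) (f n) - ip l (f n)| < e.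
Proof.
move=> u_cvg e e_gt0; have [N HN] := u_cvg e e_gt0; exists N => k Nk.
rewrite -ipBl -(ltr_pXn2r (n := 2)) ?nnegrE ?normr_ge0 ?ltW //.
by apply: le_lt_trans (sq_norm_coef_le _ _) _; rewrite -hnorm_ltE //; exact: HN.
Qed.

Lemma has_sumH_ip_f (c : nat -> C) s n :
  has_sumH ip (fun i => c i *: f i) s -> ip s (f n) = c n.
Proof.
move=> /(hcvg_ip_f n) coef_cvg; apply/eqP; rewrite eq_sym -subr_eq0.
apply/negPn/negP; rewrite -normr_gt0 => dist_gt0.
have [N HN] := coef_cvg _ dist_gt0.
have n_lt : (n < maxn N n.+1)%N by rewrite leq_maxr.
have := HN _ (leq_maxl N n.+1).
by rewrite -(big_mkord xpredT (fun i => c i *: f i)) ip_sum_f leq0n n_lt ltxx.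
Qed.

Hypothesis H_complete : hcomplete ip.
Hypothesis C_monotone_cauchy : monotone_cauchy C.

Lemma sq_summable_has_sumH (c : nat -> C) :
  sq_summable c -> exists y, has_sumH ip (fun n => c n *: f n) y.
Proof.
case=> M c_bounded; apply: H_complete => e e_gt0.
pose a n := \sum_(i < n) `|c i| ^+ 2.
have a_homo : {homo a : m n / (m <= n)%N >-> m <= n}.
  move=> m n mn; rewrite -subr_ge0 /a (sum_ordB (fun i => `|c i| ^+ 2)) //.
  by rewrite sumr_ge0 // => i _; rewrite exprn_ge0.
have [N HN] := C_monotone_cauchy a_homo c_bounded (exprn_gt0 2 e_gt0).
have cauchy m n : (N <= m)%N -> (m <= n)%N ->
    hnorm ip (\sum_(i < n) c i *: f i - \sum_(i < m) c i *: f i) < e.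
  move=> Nm mn; rewrite (sum_ordB (fun i => c i *: f i)) // hnorm_ltE // ip_sum_self.
  by rewrite -(sum_ordB (fun i => `|c i| ^+ 2)) //; apply: HN.
exists N => m n Nm Nn; case: (leqP n m) => [nm|/ltnW mn]; first exact: cauchy.
by rewrite -hnormN opprB; apply: cauchy.
Qed.

Lemma Tfphi_total phi x : Dseq ip phi x -> exists y, Tfphi ip f phi x y.
Proof. by move=> phi_x; have [y x_sum] := sq_summable_has_sumH phi_x; exists y. Qed.

Hypothesis f_total : forall x, (forall n, ip x (f n) = 0) -> x = 0.

Lemma onb_partial_sum_approx x e : 0 < e ->
  exists N, hnorm ip (x - \sum_(i < N) ip x (f i) *: f i) < e.
Proof.
move=> e_gt0; have x_sq : sq_summable (fun n => ip x (f n)) by exists (ip x x); apply: bessel.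
have [s s_sum] := sq_summable_has_sumH x_sq.
have x_eq_s : x = s.
  apply/eqP; rewrite -subr_eq0; apply/eqP/f_total => n.
  by rewrite ipBl (has_sumH_ip_f n s_sum) subrr.
have [N HN] := s_sum e e_gt0; exists N.
by rewrite {1}x_eq_s -hnormN opprB; apply: HN.
Qed.

Lemma hdense_hspan_onb (S : H -> Prop) : (forall n, S (f n)) -> hdense ip (hspan S).
Proof.
move=> S_f x e e_gt0; have [N HN] := onb_partial_sum_approx x e_gt0.
by exists (\sum_(i < N) ip x (f i) *: f i); split => //; exists N, (ip x \o f), f.
Qed.

Lemma closure_Tfphi_conj_Hfa phi psi (D : H -> Prop) alpha :
  (forall n k, ip (psi n) (phi k) = (n == k)%:R) -> (forall n, D (psi n)) ->
  (forall x, D x -> Dseq ip phi x) ->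
  (forall x, D x -> exists y, Hfa ip f alpha x y /\ D y) ->
  let T := closure_op ip (hrestrict (Tfphi ip f phi) D) in
  hdense ip (hspan (himage T D)) /\
  in_L (comp_op T (comp_op (Hfa ip f alpha) (inv_op T))) (himage T D).
Proof.
move=> psi_phi D_psi D_phi Hfa_D T; split.
  apply: hdense_hspan_onb => n; exists (psi n); split => //.
  exact/closure_op_sub/(conj (D_psi n))/Tfphi_biorthogonal/D_phi.
apply: in_L_conj Hfa_D => x Dx; have [y Txy] := Tfphi_total (D_phi x Dx).
by exists y; apply/closure_op_sub.
Qed.

End Orthonormal.
End Hilbert.

Theorem theorem4p6 (R : realType) (H : lmodType R[i]) (ip : H -> H -> R[i])
  (Hip : is_inner_product ip) (Hcomplete : hcomplete ip)
  (phi psi : nat -> H) (D E : H -> Prop)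
  (Hbio : biorthogonal ip phi psi)
  (HDsub : subspace D) (HDdense : hdense ip D)
  (HEsub : subspace E) (HEdense : hdense ip E)
  (Hqb : quasi_basis ip phi psi D E)
  (HD1 : forall x, seq_span psi x -> D x) (HD2 : forall x, D x -> Dseq ip phi x)
  (HE1 : forall x, seq_span phi x -> E x) (HE2 : forall x, E x -> Dseq ip psi x)
  (f g : nat -> H)
  (Hfpos : positive_op ip (closure_op ip (hrestrict (Tfphi ip f phi) D)))
  (Hfsa : selfadjoint ip (closure_op ip (hrestrict (Tfphi ip f phi) D)))
  (Hfcp : constructing_pair ip phi f (closure_op ip (hrestrict (Tfphi ip f phi) D)))
  (Hgpos : positive_op ip (closure_op ip (hrestrict (Tfphi ip g psi) E)))
  (Hgsa : selfadjoint ip (closure_op ip (hrestrict (Tfphi ip g psi) E)))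
  (Hgcp : constructing_pair ip psi g (closure_op ip (hrestrict (Tfphi ip g psi) E))) :
  (forall alpha : nat -> R[i],
     (forall x, D x -> exists y, Hfa ip f alpha x y /\ D y) ->
     let Tphi := closure_op ip (hrestrict (Tfphi ip f phi) D) in
     hdense ip (hspan (himage Tphi D)) /\
     in_L (comp_op Tphi (comp_op (Hfa ip f alpha) (inv_op Tphi))) (himage Tphi D)) /\
  (forall alpha : nat -> R[i],
     (forall x, E x -> exists y, Hfa ip g alpha x y /\ E y) ->
     let Tpsi := closure_op ip (hrestrict (Tfphi ip g psi) E) in
     hdense ip (hspan (himage Tpsi E)) /\
     in_L (comp_op Tpsi (comp_op (Hfa ip g alpha) (inv_op Tpsi))) (himage Tpsi E)).
Proof.
have [[f_orthonormal f_total] _] := Hfcp.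
have [[g_orthonormal g_total] _] := Hgcp.
have scalars_cauchy := @complex_monotone_cauchy R.
split=> alpha H_invariant.
- apply: (closure_Tfphi_conj_Hfa Hip f_orthonormal Hcomplete scalars_cauchy f_total
           (psi := psi)) => // [n k | n].
    by rewrite (ipC Hip) Hbio conjC_nat eq_sym.
  exact/HD1/seq_span_term.
- apply: (closure_Tfphi_conj_Hfa Hip g_orthonormal Hcomplete scalars_cauchy g_total
           (psi := phi)) => // n.
  exact/HE1/seq_span_term.
Qed.
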